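(* For every $m\in\mathbb{N}$ and every $\boldsymbol{X}=(X_1,\dots,X_m)\in\mathbb{N}^m$, with $\widehat{\boldsymbol{\mu}}_m$ the empirical measure of $\boldsymbol{X}$, $$\frac{1}{2\sqrt2}\Phi_m(\widehat{\boldsymbol{\mu}}_m)\le\hat{\mathfrak{R}}_m(\boldsymbol{X})\le\frac12\Phi_m(\widehat{\boldsymbol{\mu}}_m).$$
   Context: $\widehat{\boldsymbol{\mu}}_m(i)=\frac1m\sum_{t=1}^m\mathbb{I}\{X_t=i\}$. $\Phi_m(\widehat{\boldsymbol{\mu}}_m):=\frac1{\sqrt m}\sum_{j\in\mathbb{N}}\sqrt{\widehat{\boldsymbol{\mu}}_m(j)}$. $\hat{\mathfrak{R}}_m(\boldsymbol{X})=\mathbb{E}_{\boldsymbol{\sigma}}\big[\sup_{f:\mathbb{N}\to\{0,1\}}\frac1m\sum_{t=1}^m\sigma_tf(X_t)\big]$ with $\boldsymbol{\sigma}$ uniform on $\{-1,1\}^m$. *)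

From HB Require Import structures.
From mathcomp Require Import all_boot all_order all_algebra.
From mathcomp Require Import classical_sets reals.
Set Implicit Arguments. Unset Strict Implicit. Unset Printing Implicit Defensive.
Import Order.TTheory GRing.Theory Num.Theory.
Local Open Scope ring_scope.
Local Open Scope classical_set_scope.

Definition emp_measure (R : realType) (m : nat) (X : 'I_m -> nat) (i : nat) : R :=
  (m%:R)^-1 * (#|[set t : 'I_m | X t == i]|)%:R.

(* Phi_m(mu) = (1/sqrt m) * sum_{j in N} sqrt(mu j).  The summand vanishes for
   j > max_t X_t, so the series over N is the finite sum over j <= max_t X_t. *)
Definition Phi (R : realType) (m : nat) (mu : nat -> R) (N : nat) : R :=
  (Num.sqrt (m%:R))^-1 * \sum_(j < N) Num.sqrt (mu j).

Definition maxX (m : nat) (X : 'I_m -> nat) : nat := (\max_(t : 'I_m) X t)%N.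

Definition rsign (R : realType) (b : bool) : R := if b then 1 else -1.

Definition corr (R : realType) (m : nat) (X : 'I_m -> nat)
  (s : {ffun 'I_m -> bool}) (f : nat -> bool) : R :=
  (m%:R)^-1 * \sum_(t : 'I_m) rsign R (s t) * (f (X t))%:R.

Definition emp_rademacher (R : realType) (m : nat) (X : 'I_m -> nat) : R :=
  ((2%:R : R) ^+ m)^-1 *
  \sum_(s : {ffun 'I_m -> bool}) sup (range (fun f : nat -> bool => corr R X s f)).

Arguments emp_measure R {m} X i.
Arguments emp_rademacher R {m} X.

From HB Require Import structures.
From mathcomp Require Import all_boot all_order all_algebra.
From mathcomp Require Import classical_sets reals.
From mathcomp Require Import lra ring zify.
Import Order.TTheory GRing.Theory Num.Theory.
Local Open Scope ring_scope.

(* Group the sample by value: with n_j = #{t | X_t = j}, the correlation of a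
   sign vector s with f is (1/m) sum_j f(j) S_j(s), where S_j is the sum of the
   n_j signs attached to the points equal to j.  The supremum over f is
   therefore attained at f(j) = [S_j > 0] and equals (1/m) sum_j max(S_j, 0).
   Under uniform signs each S_j is a simple random walk of length n_j, so
   the Rademacher complexity is (1/m) sum_j E|S_(n_j)| / 2, while
   Phi_m = (1/m) sum_j sqrt n_j.  It thus suffices to know, for each n,
            sqrt (n/2) <= E|S_n| <= sqrt n.
   The upper bound is Jensen's inequality with E[S_n^2] = n.  The lower bound
   (with the sharp constant) comes from the two recursions
     E|S_(n+1)| = E|S_n| + P(S_n = 0)                   (one more step),
     E|S_(n+1)| = (n+1) (P(S_n = 0) + P(S_(n+1) = 0))   (discrete Stein identity),
   which determine E|S_n| in terms of the central probabilities, and from a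
   Wallis-type estimate on those. *)

Section RandomWalk.
Context {R : realType}.
Implicit Types (n : nat) (g h : int -> R).

(* [walkE n g] is the expectation E[g(S_n)] of g at the end of a simple random
   walk S_n = e_1 + ... + e_n with independent uniform signs e_i, computed by
   conditioning on the first step. *)
Fixpoint walkE n g : R :=
  if n is n'.+1 then (walkE n' (fun x => g (x + 1)) + walkE n' (fun x => g (x - 1))) / 2
  else g 0.

Lemma eq_walkE n g h : (forall x, g x = h x) -> walkE n g = walkE n h.
Proof.
elim: n g h => [|n IH] g h gh /=; first exact: gh.
by rewrite (IH _ (fun x => h (x + 1)) (fun x => gh _))
           (IH _ (fun x => h (x - 1)) (fun x => gh _)).
Qed.

Lemma walkED n g h : walkE n (fun x => g x + h x) = walkE n g + walkE n h.
Proof.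
elim: n g h => [|n IH] g h //=.
rewrite (IH (fun x => g (x + 1))) (IH (fun x => g (x - 1))); lra.
Qed.

Lemma walkEZ n (c : R) g : walkE n (fun x => c * g x) = c * walkE n g.
Proof.
elim: n g => [|n IH] g //=.
by rewrite (IH (fun x => g (x + 1))) (IH (fun x => g (x - 1))) mulrA mulrDr.
Qed.

Lemma walkE_cst n (c : R) : walkE n (fun=> c) = c.
Proof. by elim: n => [|n IH] //=; rewrite IH; lra. Qed.

Lemma ler_walkE n g h : (forall x, g x <= h x) -> walkE n g <= walkE n h.
Proof.
elim: n g h => [|n IH] g h gh /=; first exact: gh.
have := IH _ (fun x => h (x + 1)) (fun x => gh _).
have := IH _ (fun x => h (x - 1)) (fun x => gh _).
lra.
Qed.

Lemma walkE_Sr n g :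
  walkE n.+1 g = walkE n (fun x => (g (x + 1) + g (x - 1)) / 2).
Proof.
rewrite [RHS](eq_walkE _ _ (fun x => 2^-1 * (g (x + 1) + g (x - 1)))); last first.
  by move=> x; rewrite mulrC.
by rewrite walkEZ walkED mulrC.
Qed.

Lemma walkEN n g : walkE n (fun x => g (- x)) = walkE n g.
Proof.
elim: n g => [|n IH] g /=; first by rewrite oppr0.
rewrite (eq_walkE _ (fun x => g (- (x + 1))) (fun x => g ((- x) - 1))); last first.
  by move=> x; rewrite opprD.
rewrite (eq_walkE _ (fun x => g (- (x - 1))) (fun x => g ((- x) + 1))); last first.
  by move=> x; rewrite opprB addrC.
rewrite (IH (fun y => g (y - 1))) (IH (fun y => g (y + 1))); lra.
Qed.

Lemma walkE_sqr_le n g : walkE n g ^+ 2 <= walkE n (fun x => g x ^+ 2).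
Proof.
elim: n g => [|n IH] g //=.
have := IH (fun x => g (x + 1)); have := IH (fun x => g (x - 1)).
move: (walkE n (fun x => g (x + 1))) (walkE n (fun x => g (x - 1))) => a b.
move: (walkE n _) (walkE n _) => B A hb ha.
have := sqr_ge0 (a - b); rewrite !expr2 in ha hb *; nra.
Qed.

Lemma walkE_sqr n : walkE n (fun x => (x%:~R : R) ^+ 2) = n%:R.
Proof.
elim: n => [|n IH]; first by rewrite /= expr2 mulr0.
rewrite walkE_Sr (eq_walkE _ _ (fun x => (x%:~R : R) ^+ 2 + 1)).
  by rewrite walkED IH walkE_cst natr1.
by move=> x; rewrite intrD intrB /=; lra.
Qed.

Lemma walkE_stein n (f : int -> R) :
  walkE n.+1 (fun x => x%:~R * f x)
  = n.+1%:R * walkE n (fun x => (f (x + 1) - f (x - 1)) / 2).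
Proof.
elim: n f => [|n IH] f.
  by rewrite /= !add0r rmorphN /= rmorph1 mul1r; lra.
pose fm x := (f (x + 1) + f (x - 1)) / 2.
pose Df x := (f (x + 1) - f (x - 1)) / 2.
have split_product x :
    ((x + 1)%:~R * f (x + 1) + (x - 1)%:~R * f (x - 1)) / 2 = x%:~R * fm x + Df x.
  by rewrite /fm /Df intrD intrB /=; lra.
have Dfm x : (fm (x + 1) - fm (x - 1)) / 2 = (Df (x + 1) + Df (x - 1)) / 2.
  by rewrite /fm /Df addrK subrK; lra.
rewrite walkE_Sr (eq_walkE _ _ _ split_product) walkED IH (eq_walkE _ _ _ Dfm).
by rewrite -walkE_Sr -[n.+2]addn1 natrD; lra.
Qed.

End RandomWalk.

Lemma natr_double (S : pzSemiRingType) k : k.*2%:R = 2 * k%:R :> S.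
Proof. by rewrite -mul2n natrM. Qed.

(* Sequences a, z with the initial values and recursions satisfied by
   a n = E|S_n| and z n = P(S_n = 0). *)
Section CentralRecursion.
Context {R : realType} {a z : nat -> R}.
Hypotheses (a0 : a 0 = 0) (z0 : z 0 = 1).
Hypothesis aS : forall n, a n.+1 = a n + z n.
Hypothesis aS_stein : forall n, a n.+1 = n.+1%:R * (z n + z n.+1).

Lemma z_odd_of_a_even k : a k.*2 = k.*2%:R * z k.*2 -> z k.*2.+1 = 0.
Proof.
move=> ak; have := aS_stein k.*2; rewrite aS ak -[k.*2.+1]addn1 natrD.
move: (k.*2%:R : R) (ler0n R k.*2) => K K0; nra.
Qed.

Lemma a_even k : a k.*2 = k.*2%:R * z k.*2.
Proof.
elim: k => [|k IH]; first by rewrite a0 mul0r.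
have zodd := z_odd_of_a_even _ IH.
by rewrite doubleS aS_stein zodd add0r.
Qed.

Lemma z_odd k : z k.*2.+1 = 0.
Proof. exact: z_odd_of_a_even _ (a_even k). Qed.

Lemma a_odd k : a k.*2.+1 = k.*2.+1%:R * z k.*2.
Proof. by rewrite aS a_even -[k.*2.+1]addn1 natrD mulrDl mul1r. Qed.

Lemma a_closed n : a n = n%:R * z (n./2).*2.
Proof.
rewrite -[n]odd_double_half; case: (odd n) => /=.
  by rewrite add1n /= uphalf_double a_odd.
by rewrite add0n half_double a_even.
Qed.

Lemma z_ratio k : k.*2.+2%:R * z k.*2.+2 = k.*2.+1%:R * z k.*2.
Proof.
have := aS_stein k.*2.+1; rewrite z_odd add0r => <-.
by rewrite aS z_odd addr0 a_odd.
Qed.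

Lemma z_even_sqr_ge k : (0 < k)%N -> 1 <= 4 * k%:R * z k.*2 ^+ 2.
Proof.
elim: k => [//|k IH] _; rewrite doubleS.
have := z_ratio k.
have -> : k.*2.+2%:R = 2 * k%:R + 2 :> R by rewrite -addn2 natrD natr_double.
have -> : k.*2.+1%:R = 2 * k%:R + 1 :> R by rewrite -addn1 natrD natr_double.
have [->|k_gt0] := posnP k.
  rewrite z0 mulr0 !add0r mulr1 => h.
  have -> : 4 * 1 * z 0.*2.+2 ^+ 2 = (2 * z 0.*2.+2) ^+ 2 by ring.
  by rewrite h expr1n.
have -> : k.+1%:R = k%:R + 1 :> R by rewrite natr1.
move: (IH k_gt0) (ler0n R k).
move: (k%:R : R) (z k.*2) (z k.*2.+2) => K c c' hc K0 ratio.
have K1_gt0 : 0 < K + 1 by lra.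
have step : (K + 1) * (4 * (K + 1) * c' ^+ 2) = (K + 1) * (4 * K * c ^+ 2) + c ^+ 2.
  have -> : (K + 1) * (4 * (K + 1) * c' ^+ 2) = ((2 * K + 2) * c') ^+ 2 by ring.
  by rewrite ratio; ring.
rewrite -(ler_pM2l K1_gt0) step mulr1.
have : K + 1 <= (K + 1) * (4 * K * c ^+ 2) by rewrite -{1}[K + 1]mulr1 ler_pM2l.
have := sqr_ge0 c; lra.
Qed.

Lemma a_sqr_ge n : n%:R / 2 <= a n ^+ 2.
Proof.
have [->|n_gt0] := posnP n; first by rewrite a0 expr0n /= mul0r.
have n_ge1 : 1 <= n%:R :> R by rewrite ler1n.
rewrite a_closed exprMn [n%:R ^+ 2]expr2 -mulrA; apply: ler_wpM2l; first lra.
have [->|half_gt0] := posnP n./2.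
  by rewrite z0 expr1n mulr1; lra.
have := z_even_sqr_ge _ half_gt0.
have : 2 * (n./2)%:R <= n%:R :> R.
  by rewrite -natr_double ler_nat -{2}[n]odd_double_half leq_addl.
move: (n./2%:R : R) (z _) => J c hJ hc.
have : 4 * J * c ^+ 2 <= 2 * n%:R * c ^+ 2 by apply: ler_wpM2r; [exact: sqr_ge0 | lra].
lra.
Qed.

End CentralRecursion.

Section MeanAbs.
Variable R : realType.
Implicit Types n : nat.

Definition meanabs n : R := walkE n (fun x => `|x|%:~R).
Definition zeroprob n : R := walkE n (fun x => (x == 0)%:R).

(* One more step: (|x+1| + |x-1|) / 2 = |x| + [x = 0] on the integers. *)
Lemma meanabsS n : meanabs n.+1 = meanabs n + zeroprob n.
Proof.
rewrite /meanabs /zeroprob walkE_Sr -walkED; apply: eq_walkE => x.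
have /(congr1 (fun z : int => z%:~R : R)) :
  `|x + 1| + `|x - 1| = 2 * `|x| + 2 * (x == 0)%:R :> int by lia.
rewrite /= !intrD !intrM !natz /=; lra.
Qed.

(* Stein's identity with f = sign, since |x| = x sgn x and
   (sgn(x+1) - sgn(x-1)) / 2 = [x = 0] + ([x+1 = 0] + [x-1 = 0]) / 2. *)
Lemma meanabs_stein n : meanabs n.+1 = n.+1%:R * (zeroprob n + zeroprob n.+1).
Proof.
rewrite /meanabs (eq_walkE _ _ (fun x => x%:~R * (sgz x)%:~R)); last first.
  by move=> x; rewrite -intrM; congr intr; lia.
rewrite walkE_stein /zeroprob walkE_Sr -walkED; congr (_ * _); apply: eq_walkE => x.
have /(congr1 (fun z : int => z%:~R : R)) :
  sgz (x + 1) - sgz (x - 1) = 2 * (x == 0)%:R + (x + 1 == 0)%:R + (x - 1 == 0)%:R :> int by lia.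
rewrite /= !intrD intrN !intrM !natz /=; lra.
Qed.

Lemma meanabs0 : meanabs 0 = 0.
Proof. by rewrite /meanabs /= normr0. Qed.

Lemma zeroprob0 : zeroprob 0 = 1.
Proof. by []. Qed.

Lemma meanabs_ge0 n : 0 <= meanabs n.
Proof.
rewrite -(walkE_cst n 0); apply: ler_walkE => x; by rewrite ler0z normr_ge0.
Qed.

Lemma meanabs_sqr_le n : meanabs n ^+ 2 <= n%:R.
Proof.
rewrite -(walkE_sqr n); apply: le_trans (walkE_sqr_le _ _) _.
by rewrite le_eqVlt; apply/orP; left; apply/eqP/eq_walkE => x;
  rewrite intr_norm real_normK ?num_real.
Qed.

Lemma meanabs_sqr_ge n : n%:R / 2 <= meanabs n ^+ 2.
Proof.
exact: (a_sqr_ge meanabs0 zeroprob0 meanabsS meanabs_stein).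
Qed.

(* E[max(S_n, 0)] = E|S_n| / 2 by the symmetry of the walk. *)
Lemma walkE_pos_part n : walkE n (fun x => Num.max (x%:~R : R) 0) = meanabs n / 2.
Proof.
set g := fun x : int => Num.max (x%:~R : R) 0.
have -> : walkE n g = (walkE n g + walkE n (fun x => g (- x))) / 2 by rewrite walkEN; lra.
congr (_ / 2); rewrite -walkED; apply: eq_walkE => x.
rewrite /g rmorphN /= intr_norm; move: (x%:~R : R) => y.
have [y_ge0|y_lt0] := lerP 0 y.
  by rewrite ger0_norm // (max_idPr _) ?addr0 // oppr_le0.
by rewrite ltr0_norm // add0r (max_idPl _) // oppr_ge0 ltW.
Qed.

End MeanAbs.

Lemma pos_part_bounds (R : realType) n :
  (2%:R * Num.sqrt 2%:R)^-1 * Num.sqrt n%:R <= meanabs R n / 2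
  /\ meanabs R n / 2 <= 2%:R^-1 * Num.sqrt (n%:R : R).
Proof.
have a_ge0 := meanabs_ge0 R n.
have up : meanabs R n <= Num.sqrt n%:R.
  by rewrite -(ger0_norm a_ge0) -sqrtr_sqr; apply/ler_wsqrtr/meanabs_sqr_le.
have lo : Num.sqrt n%:R * (Num.sqrt 2%:R)^-1 <= meanabs R n.
  rewrite -sqrtrV ?ler0n // -sqrtrM ?ler0n // -(ger0_norm a_ge0) -sqrtr_sqr.
  exact/ler_wsqrtr/meanabs_sqr_ge.
split; last by lra.
by rewrite invfM -mulrA [_^-1 * Num.sqrt _]mulrC; lra.
Qed.

Section SignVectors.
Context {R : realType} {m : nat}.
Implicit Types s : {ffun 'I_m -> bool}.

Definition sign_int (b : bool) : int := if b then 1 else -1.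

(* Flipping the sign at coordinate t0; being an involution, it permutes the
   sign vectors. *)
Definition flip (t0 : 'I_m) s : {ffun 'I_m -> bool} :=
  [ffun t => if t == t0 then ~~ s t else s t].

Lemma flipK t0 : involutive (flip t0).
Proof.
move=> s; apply/ffunP => t; rewrite !ffunE.
by case: (t == t0) => //; rewrite negbK.
Qed.

(* Under uniform signs, the partial sum over a block A of coordinates is a
   simple random walk of length #|A|; proved by peeling off one coordinate. *)
Lemma sum_signs_walkE (A : {set 'I_m}) (g : int -> R) :
  \sum_(s : {ffun 'I_m -> bool}) g (\sum_(t in A) sign_int (s t))
  = (2 ^ m)%:R * walkE #|A| g.
Proof.
move: {2}#|A| (erefl #|A|) => n.
elim: n A g => [|n IH] A g cardA.
  rewrite (cards0_eq cardA); under eq_bigr do rewrite big_set0.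
  by rewrite sumr_const cards0 /= mulr_natl card_ffun card_bool card_ord.
have [t0 At0] : exists t0, t0 \in A by apply/card_gt0P; rewrite cardA.
set B := A :\ t0.
have cardB : #|B| = n by move: cardA; rewrite (cardsD1 t0 A) At0 add1n => -[].
have flip_B s : \sum_(t in B) sign_int (flip t0 s t) = \sum_(t in B) sign_int (s t).
  by apply: eq_bigr => t; rewrite !inE ffunE => /andP [/negbTE ->].
under eq_bigr do rewrite (big_setD1 t0 At0) /=.
set L := \sum_(s : {ffun 'I_m -> bool}) _.
have L_flip :
    L = \sum_(s : {ffun 'I_m -> bool}) g (sign_int (~~ s t0) + \sum_(t in B) sign_int (s t)).
  rewrite /L (reindex_inj (inv_inj (flipK t0))) /=.
  by apply: eq_bigr => s _; rewrite flip_B ffunE eqxx.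
have : L + L = \sum_(s : {ffun 'I_m -> bool}) g (\sum_(t in B) sign_int (s t) + 1)
             + \sum_(s : {ffun 'I_m -> bool}) g (\sum_(t in B) sign_int (s t) - 1).
  rewrite {2}L_flip /L -!big_split /=; apply: eq_bigr => s _.
  by case: (s t0); rewrite /= ?[_ + 1]addrC ?[_ - 1]addrC // addrC.
rewrite (IH B (fun x => g (x + 1)) cardB) (IH B (fun x => g (x - 1)) cardB) => sumLL.
have -> : L = (L + L) / 2 by field.
by rewrite sumLL cardA cardB /=; field.
Qed.

End SignVectors.

Section Rademacher.
Variables (R : realType) (m : nat) (X : 'I_m -> nat).
Implicit Types s : {ffun 'I_m -> bool}.

Lemma emp_measureE j :
  emp_measure R X j = m%:R^-1 * #|[set t : 'I_m | X t == j]|%:R.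
Proof.
rewrite /emp_measure; congr (_ * _%:R); apply: eq_card => t; rewrite inE.
by apply/idP/idP => [/set_mem /= -> | h] //; exact: mem_set.
Qed.

Lemma X_lt_max t : (X t < (maxX X).+1)%N.
Proof. by rewrite ltnS; apply: (@leq_bigmax _ X t). Qed.

Definition block_sum s (j : nat) : R := \sum_(t | X t == j) rsign R (s t).

Lemma corrE s (f : nat -> bool) :
  corr R X s f = m%:R^-1 * \sum_(j < (maxX X).+1) (f j)%:R * block_sum s j.
Proof.
rewrite /corr; congr (_ * _).
rewrite (partition_big (fun t => Ordinal (X_lt_max t)) xpredT) //=.
apply: eq_bigr => j _; rewrite /block_sum big_distrr /=.
apply: eq_big => t; first by rewrite -val_eqE.
by move=> /eqP <-; rewrite mulrC.
Qed.

(* The supremum over f : N -> {0,1} is attained at f = [block sum > 0]. *)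
Lemma sup_corr s :
  sup (range (fun f : nat -> bool => corr R X s f))
  = m%:R^-1 * \sum_(j < (maxX X).+1) Num.max (block_sum s j) 0.
Proof.
set M := _ * _.
have ub f : corr R X s f <= M.
  rewrite corrE /M; apply: ler_wpM2l; first by rewrite invr_ge0 ler0n.
  by apply: ler_sum => j _; case: (f j); rewrite /= ?mul1r ?mul0r le_max lexx ?orbT.
pose f0 j := 0 < block_sum s j.
have f0_max : corr R X s f0 = M.
  rewrite corrE /M; congr (_ * _); apply: eq_bigr => j _.
  by rewrite /f0; case: ltP => /=; rewrite ?mul1r ?mul0r.
apply/le_anti/andP; split.
  by apply: ge_sup; [exists (corr R X s f0), f0 | move=> y [f _ <-]; exact: ub].
rewrite -f0_max; apply: ub_le_sup; last by exists f0.
by exists M => y [f _ <-]; exact: ub.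
Qed.

Lemma block_sumE s j :
  block_sum s j = (\sum_(t in [set t : 'I_m | X t == j]) sign_int (s t))%:~R.
Proof.
rewrite /block_sum rmorph_sum; apply: eq_big => [t|t _]; first by rewrite inE.
by case: (s t); rewrite /rsign /sign_int /= ?rmorphN rmorph1.
Qed.

Lemma mean_pos_block_sum j :
  (2%:R ^+ m)^-1 * \sum_(s : {ffun 'I_m -> bool}) Num.max (block_sum s j) 0
  = meanabs R #|[set t : 'I_m | X t == j]| / 2.
Proof.
under eq_bigr do rewrite block_sumE.
rewrite (sum_signs_walkE _ (fun x : int => Num.max (x%:~R : R) 0)).
by rewrite walkE_pos_part natrX mulKf // expf_neq0 // pnatr_eq0.
Qed.

Lemma emp_rademacherE :
  emp_rademacher R X =
    m%:R^-1 * \sum_(j < (maxX X).+1) meanabs R #|[set t : 'I_m | X t == j]| / 2.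
Proof.
rewrite /emp_rademacher; under eq_bigr do rewrite sup_corr.
rewrite -mulr_sumr mulrCA exchange_big /= mulr_sumr; congr (_ * _).
by apply: eq_bigr => j _; exact: mean_pos_block_sum.
Qed.

Lemma PhiE : (0 < m)%N ->
  Phi m (emp_measure R X) (maxX X).+1 =
    m%:R^-1 * \sum_(j < (maxX X).+1) Num.sqrt (#|[set t : 'I_m | X t == j]|%:R : R).
Proof.
move=> m_gt0; rewrite /Phi.
under eq_bigr do rewrite emp_measureE sqrtrM ?invr_ge0 ?ler0n // sqrtrV ?ler0n //.
by rewrite -mulr_sumr mulrA -invfM -expr2 sqr_sqrtr ?ler0n.
Qed.

End Rademacher.

Theorem lemma2 (R : realType) (m : nat) (hm : (0 < m)%N) (X : 'I_m -> nat) :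
  (2%:R * Num.sqrt 2%:R)^-1 * Phi m (emp_measure R X) (maxX X).+1
    <= emp_rademacher R X
  /\ emp_rademacher R X <= 2%:R^-1 * Phi m (emp_measure R X) (maxX X).+1.
Proof.
rewrite emp_rademacherE PhiE // (mulrCA (2%:R * _)^-1) (mulrCA 2%:R^-1) !mulr_sumr.
have m_inv_ge0 : 0 <= (m%:R : R)^-1 by rewrite invr_ge0 ler0n.
split; apply: ler_sum => j _; apply: ler_wpM2l => //;
  have [lo up] := pos_part_bounds R #|[set t : 'I_m | X t == j]|; [exact: lo | exact: up].
Qed.
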